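(* Let $\Psi\in\mathcal P_p$, $m\ge p$, $q\in\{1,2,\ldots\}$, $N=n+p+qm+1$, $\beta=(q/N)^{1/q}$, $\gamma=n/N$, and let $\hat\Sigma$ be the power inverse Wishart MAP estimator with prior parameters $(\Psi,m,q)$. Then, in the Loewner order on symmetric matrices, $$\beta\Psi\le\hat\Sigma\le\beta\Psi+\gamma S.$$ In particular $\beta\Psi_{ii}\le\hat\Sigma_{ii}\le\beta\Psi_{ii}+\gamma S_{ii}$ for every $i$.
   Context: $\mathcal P_p$ is the set of positive definite $p\times p$ real matrices; $A\le B$ means $B-A$ is positive semidefinite. Data $X_1,\ldots,X_n\in\mathbb R^p$, $\bar X=\frac1n\sum_iX_i$, $S=\frac1n\sum_i(X_i-\bar X)(X_i-\bar X)^\top$. The MAP estimator $\hat\Sigma$ is the $\Sigma$-component of the unique maximizer over $\mu\in\mathbb R^p$, $\Sigma\in\mathcal P_p$ of $|\Sigma|^{-n/2}\exp(-\tfrac12\sum_i(X_i-\mu)^\top\Sigma^{-1}(X_i-\mu))\cdot\exp(-\tfrac12\operatorname{tr}((\Psi^{-1/2}\Sigma\Psi^{-1/2})^{-q}))|\Sigma|^{-(qm+p+1)/2}$, with $\Psi^{1/2}$ the positive definite square root and $\Psi^{-1/2}=(\Psi^{1/2})^{-1}$. *)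

From HB Require Import structures.
From Stdlib Require Import Reals Lra ClassicalEpsilon FunctionalExtensionality.
From mathcomp Require Import all_boot all_algebra.

Set Implicit Arguments.
Unset Strict Implicit.
Unset Printing Implicit Defensive.

Definition R_eqb (x y : R) : bool := if Req_EM_T x y then true else false.

Lemma R_eqP : Equality.axiom R_eqb.
Proof. move=> x y; rewrite /R_eqb; case: Req_EM_T => h; by constructor. Qed.

HB.instance Definition _ := hasDecEq.Build R R_eqP.

Definition R_find (P : pred R) (_ : nat) : option R :=
  match excluded_middle_informative (exists x, P x) with
  | left h => Some (proj1_sig (constructive_indefinite_description _ h))
  | right _ => None
  end.

Lemma R_find_correct P n x : R_find P n = Some x -> P x.
Proof.
rewrite /R_find; case: excluded_middle_informative => // h [<-].
exact: (proj2_sig (constructive_indefinite_description _ h)).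
Qed.

Lemma R_find_complete (P : pred R) : (exists x, P x) -> exists n, R_find P n.
Proof. move=> h; exists 0%N; rewrite /R_find; by case: excluded_middle_informative. Qed.

Lemma R_find_ext (P Q : pred R) : P =1 Q -> R_find P =1 R_find Q.
Proof. move=> h; have -> : P = Q by apply: functional_extensionality. by []. Qed.

HB.instance Definition _ := hasChoice.Build R R_find_correct R_find_complete R_find_ext.

Lemma R_addA : ssrfun.associative Rplus. Proof. move=> *; ring. Qed.
Lemma R_addC : ssrfun.commutative Rplus. Proof. move=> *; ring. Qed.
Lemma R_add0 : ssrfun.left_id R0 Rplus. Proof. move=> *; ring. Qed.
Lemma R_addN : ssrfun.left_inverse R0 Ropp Rplus. Proof. move=> *; ring. Qed.

HB.instance Definition _ := GRing.isZmodule.Build R R_addA R_addC R_add0 R_addN.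

Lemma R_mulA : ssrfun.associative Rmult. Proof. move=> *; ring. Qed.
Lemma R_mulC : ssrfun.commutative Rmult. Proof. move=> *; ring. Qed.
Lemma R_mul1 : ssrfun.left_id R1 Rmult. Proof. move=> *; ring. Qed.
Lemma R_mulDl : ssrfun.left_distributive Rmult Rplus. Proof. move=> *; ring. Qed.
Lemma R_one_neq0 : (R1 : R) != R0.
Proof. by apply/eqP; exact R1_neq_R0. Qed.

HB.instance Definition _ :=
  GRing.Zmodule_isComNzRing.Build R R_mulA R_mulC R_mul1 R_mulDl R_one_neq0.

Definition R_unit : {pred R} := fun x => x != R0.
Definition R_inv (x : R) : R := if x == R0 then x else Rinv x.

Lemma R_mulVx : {in R_unit, ssrfun.left_inverse R1 R_inv Rmult}.
Proof.
move=> x; rewrite /R_unit /R_inv unfold_in => Hx; rewrite (negPf Hx).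
apply: Rinv_l => h; by rewrite h eqxx in Hx.
Qed.

Lemma R_unitPl (x y : R) : Rmult y x = R1 -> R_unit x.
Proof.
move=> h; rewrite /R_unit; apply/eqP => hx.
rewrite hx Rmult_0_r in h; exact: R1_neq_R0 (esym h).
Qed.

Lemma R_inv_out : {in predC R_unit, R_inv =1 id}.
Proof.
move=> x; rewrite /R_unit /R_inv !unfold_in /= negbK => /eqP ->.
by rewrite eqxx.
Qed.

HB.instance Definition _ := GRing.ComNzRing_hasMulInverse.Build R
  R_mulVx R_unitPl R_inv_out.

Local Open Scope ring_scope.

Definition symmetric (p : nat) (A : 'M[R]_p) : Prop := A^T = A.

Definition qform (p : nat) (A : 'M[R]_p) (v : 'cV[R]_p) : R :=
  (v^T *m A *m v) ord0 ord0.

Definition posdef (p : nat) (A : 'M[R]_p) : Prop :=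
  symmetric A /\ forall v : 'cV[R]_p, v <> 0 -> Rlt R0 (qform A v).

Definition possemidef (p : nat) (A : 'M[R]_p) : Prop :=
  symmetric A /\ forall v : 'cV[R]_p, Rle R0 (qform A v).

Definition loewner_le (p : nat) (A B : 'M[R]_p) : Prop := possemidef (B - A).

Definition sample_mean (p n : nat) (X : 'I_n -> 'cV[R]_p) : 'cV[R]_p :=
  (Rinv (INR n)) *: \sum_(i < n) X i.

Definition sample_cov (p n : nat) (X : 'I_n -> 'cV[R]_p) : 'M[R]_p :=
  (Rinv (INR n)) *:
    \sum_(i < n) ((X i - sample_mean X) *m (X i - sample_mean X)^T).

(* the posterior objective (likelihood times power inverse Wishart prior),
   with Psi_inv_half = Psi^{-1/2}:
   |Sigma|^{-n/2} exp(-1/2 sum_i (X_i-mu)^T Sigma^{-1} (X_i-mu))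
   * exp(-1/2 tr((Psi^{-1/2} Sigma Psi^{-1/2})^{-q})) * |Sigma|^{-(qm+p+1)/2} *)
Definition piw_posterior (p n q : nat) (m : R) (Psi_inv_half : 'M[R]_p)
    (X : 'I_n -> 'cV[R]_p) (mu : 'cV[R]_p) (Sigma : 'M[R]_p) : R :=
  Rmult (Rmult (Rmult
    (Rpower (\det Sigma) (Ropp (Rdiv (INR n) 2)))
    (exp (Ropp (Rdiv (\sum_(i < n) qform (invmx Sigma) (X i - mu)) 2))))
    (exp (Ropp (Rdiv (\tr ((invmx (Psi_inv_half *m Sigma *m Psi_inv_half)) ^+ q)) 2))))
    (Rpower (\det Sigma)
       (Ropp (Rdiv (Rplus (Rplus (Rmult (INR q) m) (INR p)) R1) 2))).

Definition is_piw_MAP (p n q : nat) (m : R) (Psi_inv_half : 'M[R]_p)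
    (X : 'I_n -> 'cV[R]_p) (mu : 'cV[R]_p) (Sigma : 'M[R]_p) : Prop :=
  posdef Sigma /\
  forall (mu' : 'cV[R]_p) (Sigma' : 'M[R]_p), posdef Sigma' ->
    Rle (piw_posterior q m Psi_inv_half X mu' Sigma')
        (piw_posterior q m Psi_inv_half X mu Sigma).

From Pilot Require Import Defs.
From HB Require Import structures.
From Stdlib Require Import Reals Lra Lia.
From mathcomp Require Import all_boot all_algebra zify.

(* Write Sigma for the MAP covariance, P = Psi^{1/2}, M = P Sigma^{-1} P
   (positive definite), N = n + p + q m + 1 and a_j(x) = x^T M^j x.
   1. First-order optimality.  Replacing Sigma^{-1} by Sigma^{-1} - d u u^T
      keeps the covariance positive definite for small |d|; the rank-one
      determinant formula and the binomial expansion of the q-th power give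
      the exact change of the log-posterior.  Maximality for both signs of d
      yields the stationarity equation
           A(u) + q (P u)^T M^(q-1) (P u) = N u^T Sigma u,
      where A(u) = sum_i (u^T (X_i - mu))^2.
   2. Maximality in mu gives mu = Xbar, hence A(u) = n u^T S u.
   3. For x <> 0 the moments a_j(x) are positive and log-convex (Cauchy-Schwarz
      for the forms v^T M^e w).  Taking u = Sigma^{-1} P x in the stationarity
      equation gives N a_1 = A + q a_(q+1), and u = Sigma^{-1} P M x gives
      q a_(q+3) <= N a_3.
   4. A lemma on convex real sequences turns the latter into
      beta a_2 <= a_1 and q a_(q+1) <= N beta a_2.
   5. For w = Sigma^{-1} P x one has a_1 = w^T Sigma w and a_2 = w^T Psi w; as x
      ranges over all vectors so does w, which gives the Loewner bounds, and the
      diagonal bounds are the case w = e_i. *)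

Set Implicit Arguments.
Unset Strict Implicit.
Unset Printing Implicit Defensive.

Section RealInequalities.
Local Open Scope R_scope.

Section ConvexSequence.
Variable l : nat -> R.
Hypothesis l_convex : forall i, 2 * l i.+1 <= l i + l i.+2.
Let incr i := l i.+1 - l i.

Lemma incr_mono i k : incr i <= incr (i + k).
Proof.
elim: k => [|k IH]; first by rewrite addn0; lra.
have := l_convex (i + k); rewrite addnS /incr; rewrite /incr in IH; lra.
Qed.

Lemma chord_left j : l j - l 0 <= INR j * incr j.
Proof.
elim: j => [|j IH]; first by rewrite /=; lra.
have h := incr_mono j 1; rewrite addn1 in h.
have hj := pos_INR j.
have : INR j * incr j <= INR j * incr j.+1 by apply: Rmult_le_compat_l.
rewrite S_INR /incr in IH h * => hmul; lra.
Qed.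

Lemma chord_right j k : INR k * incr j <= l (j + k) - l j.
Proof.
elim: k => [|k IH]; first by rewrite addn0 /=; lra.
have h := incr_mono j k.
rewrite S_INR addnS /incr in IH h *; lra.
Qed.

Lemma convex_chord j k : INR (j + k) * l j <= INR k * l 0 + INR j * l (j + k).
Proof.
have hA := chord_left j; have hB := chord_right j k.
have hj := pos_INR j; have hk := pos_INR k.
have h1 : INR k * (l j - l 0) <= INR k * (INR j * incr j) by apply: Rmult_le_compat_l.
have h2 : INR j * (INR k * incr j) <= INR j * (l (j + k) - l j) by apply: Rmult_le_compat_l.
rewrite plus_INR; nra.
Qed.
End ConvexSequence.

Lemma convex_decay (L : nat -> R) (q : nat) (B : R) :
  (forall i, 2 * L i.+1 <= L i + L i.+2) ->
  INR q.+1 * B + L q.+2 <= L 1%nat ->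
  B + L 1%nat <= L 0%nat /\ L q <= L 0%nat - INR q * B.
Proof.
move=> L_convex Hdrop.
have hq := pos_INR q.
rewrite S_INR in Hdrop.
have first_step : B + L 1%nat <= L 0%nat.
  have := convex_chord L_convex 1 q.+1; rewrite add1n !S_INR INR_0 => h.
  nra.
split=> //.
have := convex_chord L_convex q 2; rewrite addn2 !S_INR INR_0 => h.
nra.
Qed.

Lemma ln_le_compat x y : 0 < x -> x <= y -> ln x <= ln y.
Proof.
move=> hx hxy; case: (Rle_lt_or_eq_dec _ _ hxy) => h.
  by apply: Rlt_le; apply: ln_increasing.
by subst; apply: Rle_refl.
Qed.

Lemma ln_le_inv x y : 0 < x -> 0 < y -> ln x <= ln y -> x <= y.
Proof.
move=> hx hy h; case: (Rle_lt_dec x y) => // hlt.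
have := ln_increasing _ _ hy hlt; lra.
Qed.

Lemma exp_le_inv x y : exp x <= exp y -> x <= y.
Proof.
move=> h; case: (Rle_lt_dec x y) => // hlt.
have := exp_increasing _ _ hlt; lra.
Qed.

(* In logarithms l_j = ln a_j the sequence is convex and
   q ln beta = ln q - ln N, so convex_decay applied to l_(j+2) gives
   ln beta + l_3 <= l_2 (hence ln beta + l_2 <= l_1) and l_(q+1) <= l_2 - (q-1) ln beta. *)
Lemma logconvex_moment_bounds (a : nat -> R) (q : nat) (N : R) :
  0 < N -> (0 < q)%N -> (forall j, 0 < a j) ->
  (forall j, a j.+1 * a j.+1 <= a j * a j.+2) ->
  INR q * a q.+3 <= N * a 3%nat ->
  let beta := Rpower (INR q / N) (/ INR q) in
  beta * a 2%nat <= a 1%nat /\ INR q * a q.+1 <= N * beta * a 2%nat.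
Proof.
case: q => [|q] HN Hq; first by [].
move=> Ha Hlc Hrel beta.
have Hq0 : 0 < INR q.+1 by apply: lt_0_INR; lia.
pose l j := ln (a j).
have l_convex : forall i, 2 * l i.+1 <= l i + l i.+2.
  move=> i; rewrite /l -ln_mult //.
  have -> : 2 * ln (a i.+1) = ln (a i.+1 * a i.+1) by rewrite ln_mult //; ring.
  by apply: ln_le_compat; [apply: Rmult_lt_0_compat|].
have Hbeta : 0 < beta by rewrite /beta /Rpower; apply: exp_pos.
set B := ln beta.
have qB : INR q.+1 * B = ln (INR q.+1) - ln N.
  rewrite /B /beta ln_Rpower /Rdiv ln_mult //; last exact: Rinv_0_lt_compat.
  by rewrite ln_Rinv //; field; lra.
have Hrel_ln : ln (INR q.+1) + l q.+4 <= ln N + l 3%nat.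
  by rewrite /l -!ln_mult //; apply: ln_le_compat => //; apply: Rmult_lt_0_compat.
have := convex_decay (L := fun j => l (j + 2)%nat) (q := q) (B := B)
  (fun i => l_convex (i + 2)%nat).
cbv beta; rewrite !addn2 => /(_ ltac:(lra)) [step2 upper].
have step1 : B + l 2%nat <= l 1%nat by have := l_convex 1%nat; lra.
split.
  apply: ln_le_inv; [exact: Rmult_lt_0_compat|exact: Ha|].
  by rewrite ln_mult.
apply: ln_le_inv; [apply: Rmult_lt_0_compat => //|do 2?apply: Rmult_lt_0_compat => //|].
rewrite !ln_mult //; last exact: Rmult_lt_0_compat.
rewrite -/(l q.+2) -/(l 2%nat) -/B S_INR in qB *; lra.
Qed.
End RealInequalities.

Section FirstOrder.
Local Open Scope R_scope.

Lemma ln_ge_one_minus_inv y : 0 < y -> 1 - / y <= ln y.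
Proof.
move=> hy.
have h1 : / y <= exp (/ y - 1) by have := exp_ineq1_le (/ y - 1); lra.
have hy' : 0 < / y by apply: Rinv_0_lt_compat.
have := ln_le_compat hy' h1; rewrite ln_exp ln_Rinv //; lra.
Qed.

Lemma ln_one_minus_lower x : Rabs x <= / 2 -> - x - 2 * (x * x) <= ln (1 - x).
Proof.
move=> hx.
have hx' : - / 2 <= x <= / 2 by move: hx; split_Rabs; lra.
have hy : 0 < 1 - x by lra.
apply: (Rle_trans _ _ _ _ (ln_ge_one_minus_inv hy)).
have -> : 1 - / (1 - x) = - x / (1 - x) by field; lra.
apply: (Rmult_le_reg_r (1 - x)) => //.
have -> : - x / (1 - x) * (1 - x) = - x by field; lra.
nra.
Qed.

Lemma first_order_vanishes (eta C L : R) : 0 < eta -> 0 <= C ->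
  (forall d, Rabs d <= eta -> d * L <= C * (d * d)) -> L = 0.
Proof.
move=> he hC H.
have small_pos : forall t, 0 < t -> t <= Rabs L / (C + 1) -> t * (C + 1) <= Rabs L.
  move=> t ht htL.
  have := Rmult_le_compat_r (C + 1) _ _ (ltac:(lra)) htL.
  by have -> : Rabs L / (C + 1) * (C + 1) = Rabs L by field; lra.
case: (Req_dec L 0) => // hL0.
have hL : 0 < Rabs L by apply: Rabs_pos_lt.
set t := Rmin eta (Rabs L / (C + 1)).
have ht : 0 < t by apply: Rmin_pos => //; apply: Rdiv_lt_0_compat; lra.
have htL := small_pos t ht (Rmin_r _ _).
have ht_eta : Rabs t <= eta by rewrite Rabs_right; [apply: Rmin_l|lra].
case: (Rle_lt_dec 0 L) => hsign.
- have := H t ht_eta; rewrite Rabs_right in htL; nra.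
- have := H (- t); rewrite Rabs_Ropp => /(_ ht_eta).
  rewrite Rabs_left in htL => //; nra.
Qed.

(* Steps |d| <= 1 / (2 (k + 1)) are small enough for both the uniform
   remainder bounds (|d| <= 1) and the logarithm bound (|d k| <= 1/2). *)
Definition step_bound (k : R) : R := / (2 * (k + 1)).

Lemma step_bound_pos k : 0 <= k -> 0 < step_bound k.
Proof. by move=> hk; apply: Rinv_0_lt_compat; lra. Qed.

Lemma small_step (k d : R) : 0 <= k -> Rabs d <= step_bound k ->
  Rabs d <= 1 /\ Rabs (d * k) <= / 2.
Proof.
rewrite /step_bound => hk hd.
have hpos : 0 < / (2 * (k + 1)) by apply: Rinv_0_lt_compat; lra.
have e : / (2 * (k + 1)) * k = / 2 - / (2 * (k + 1)) by field; lra.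
have eta_k : / (2 * (k + 1)) * k <= / 2 by lra.
have eta_le1 : / (2 * (k + 1)) <= 1.
  by have := Rmult_le_pos _ _ (Rlt_le _ _ hpos) hk; lra.
split; first lra.
rewrite Rabs_mult (Rabs_right k); last lra.
by apply: Rle_trans eta_k; apply: Rmult_le_compat_r.
Qed.

Lemma ln_nonpos (x : R) : x <= 0 -> ln x = 0.
Proof. by move=> h; rewrite /ln; case: Rlt_dec => // hh; exfalso; lra. Qed.

Lemma quadratic_discriminant (a b c : R) : 0 <= c ->
  (forall t, 0 <= a + 2 * t * b + t * t * c) -> b * b <= a * c.
Proof.
move=> Hc H.
have Ha : 0 <= a by move: (H 0); lra.
case: (Rle_lt_or_eq_dec 0 c Hc) => Hc'.
- have h := H (- b / c).
  have e : a + 2 * (- b / c) * b + (- b / c) * (- b / c) * c = (a * c - b * b) / c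
    by field; lra.
  rewrite e in h.
  have : 0 <= (a * c - b * b) / c * c by apply: Rmult_le_pos; lra.
  have -> : (a * c - b * b) / c * c = a * c - b * b by field; lra.
  lra.
- subst c; case: (Req_dec b 0) => Hb; first by subst; nra.
  have := H (- (a + 1) / (2 * b)).
  have -> : a + 2 * (- (a + 1) / (2 * b)) * b
            + (- (a + 1) / (2 * b)) * (- (a + 1) / (2 * b)) * 0 = -1 by field.
  lra.
Qed.
End FirstOrder.

Import GRing.Theory.
Local Open Scope ring_scope.

Lemma R_fieldP : GRing.field_axiom R.
Proof. by move=> x Hx. Qed.
HB.instance Definition _ := GRing.ComUnitRing_isField.Build R R_fieldP.

Lemma RplusE (x y : R) : x + y = Rplus x y. Proof. by []. Qed.
Lemma RmultE (x y : R) : x * y = Rmult x y. Proof. by []. Qed.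
Lemma RoppE (x : R) : - x = Ropp x. Proof. by []. Qed.
Lemma R0E : (0 : R) = R0. Proof. by []. Qed.
Lemma R1E : (1 : R) = R1. Proof. by []. Qed.
Lemma RminusE (x y : R) : x - y = Rminus x y. Proof. by []. Qed.
Lemma RnatE (k : nat) : (k%:R : R) = INR k.
Proof. elim: k => [//|k IH]; by rewrite -addn1 natrD IH plus_INR. Qed.
Ltac Rsimpl := rewrite ?RminusE ?RplusE ?RmultE ?RoppE ?R0E ?R1E ?RnatE.

Lemma mx11_mulE (A B : 'M[R]_1) : (A *m B) ord0 ord0 = A ord0 ord0 * B ord0 ord0.
Proof. by rewrite !mxE big_ord1. Qed.

Section BilinearForm.
Variable p : nat.
Implicit Types (G A B : 'M[R]_p) (x y z : 'cV[R]_p).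

Definition bil G x y : R := (x^T *m G *m y) ord0 ord0.

Lemma qformE G x : qform G x = bil G x x. Proof. by []. Qed.

Lemma bil_sym G x y : G^T = G -> bil G x y = bil G y x.
Proof.
move=> HG; rewrite /bil.
have -> : (x^T *m G *m y) ord0 ord0 = ((x^T *m G *m y)^T) ord0 ord0
  by rewrite [in RHS]mxE.
by rewrite !trmx_mul trmxK HG mulmxA.
Qed.

Lemma bilDl G x y z : bil G (x + y) z = bil G x z + bil G y z.
Proof. by rewrite /bil linearD /= !mulmxDl mxE. Qed.
Lemma bilDr G x y z : bil G z (x + y) = bil G z x + bil G z y.
Proof. by rewrite /bil !mulmxDr mxE. Qed.
Lemma bilZl G a x y : bil G (a *: x) y = a * bil G x y.
Proof. by rewrite /bil linearZ /= -!scalemxAl mxE. Qed.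
Lemma bilZr G a x y : bil G x (a *: y) = a * bil G x y.
Proof. by rewrite /bil -!scalemxAr mxE. Qed.
Lemma bil0l G x : bil G 0 x = 0.
Proof. by rewrite /bil trmx0 !mul0mx mxE. Qed.
Lemma bil0r G x : bil G x 0 = 0.
Proof. by rewrite /bil mulmx0 mxE. Qed.

Lemma bilD G1 G2 x y : bil (G1 + G2) x y = bil G1 x y + bil G2 x y.
Proof. by rewrite /bil mulmxDr mulmxDl mxE. Qed.
Lemma bilZ a G x y : bil (a *: G) x y = a * bil G x y.
Proof. by rewrite /bil -scalemxAr -scalemxAl mxE. Qed.
Lemma bilN G x y : bil (- G) x y = - bil G x y.
Proof. by rewrite -scaleN1r bilZ mulN1r. Qed.

Lemma bil_mul A G B x y : bil (A *m G *m B) x y = bil G (A^T *m x) (B *m y).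
Proof. by rewrite /bil trmx_mul trmxK !mulmxA. Qed.
Lemma bil1 x y : bil 1%:M x y = (x^T *m y) ord0 ord0.
Proof. by rewrite /bil mulmx1. Qed.
Lemma bil_rank1 (a b : 'cV[R]_p) x y :
  bil (a *m b^T) x y = (x^T *m a) ord0 ord0 * (b^T *m y) ord0 ord0.
Proof. by rewrite /bil mulmxA -(mulmxA _ _ y) mx11_mulE. Qed.
Lemma dot_sym x y : (x^T *m y) ord0 ord0 = (y^T *m x) ord0 ord0.
Proof. by rewrite -!bil1 bil_sym // trmx1. Qed.

Lemma bil_suml G (I : finType) (f : I -> 'cV[R]_p) y :
  bil G (\sum_i f i) y = \sum_i bil G (f i) y.
Proof.
apply: (big_morph (fun x => bil G x y)); last exact: bil0l.
by move=> a b; rewrite bilDl.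
Qed.

Lemma bil_sumG (I : finType) (G : I -> 'M[R]_p) x y :
  bil (\sum_i G i) x y = \sum_i bil (G i) x y.
Proof.
apply: (big_morph (fun H => bil H x y)); first by move=> a b; rewrite bilD.
by rewrite /bil mulmx0 mul0mx mxE.
Qed.

Lemma qformD G1 G2 w : qform (G1 + G2) w = qform G1 w + qform G2 w.
Proof. by rewrite !qformE bilD. Qed.
Lemma qformB G1 G2 w : qform (G1 - G2) w = qform G1 w - qform G2 w.
Proof. by rewrite !qformE bilD bilN. Qed.
Lemma qformZ a G w : qform (a *: G) w = a * qform G w.
Proof. by rewrite !qformE bilZ. Qed.
Lemma qform0 G : qform G 0 = 0.
Proof. by rewrite qformE bil0r. Qed.

Lemma qform_add G (a c : 'cV[R]_p) : G^T = G ->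
  qform G (a + c) = qform G a + 2%:R * bil G a c + qform G c.
Proof.
move=> HG; rewrite !qformE bilDl !bilDr (bil_sym c a HG).
by rewrite mulr2n mulrDl mul1r !addrA.
Qed.

Lemma cauchy_schwarz G x y : G^T = G -> (forall v, Rle 0 (bil G v v)) ->
  Rle (bil G x y * bil G x y) (bil G x x * bil G y y).
Proof.
move=> Hs Hp; apply: quadratic_discriminant => [|t]; first exact: Hp.
have h := Hp (x + t *: y).
rewrite !bilDl !bilDr !bilZl !bilZr (bil_sym y x Hs) in h.
by move: h; Rsimpl => h; lra.
Qed.
End BilinearForm.

Lemma sum_ge0 (I : finType) (P : pred I) (f : I -> R) :
  (forall i, P i -> Rle 0 (f i)) -> Rle 0 (\sum_(i | P i) f i).
Proof.
move=> H; apply: (big_ind (fun x => Rle 0 x)) => //; first exact: Rle_refl.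
by move=> x y hx hy; rewrite RplusE; apply: Rplus_le_le_0_compat.
Qed.

Lemma sum_ge_term (I : finType) (f : I -> R) (j : I) :
  (forall i, Rle 0 (f i)) -> Rle (f j) (\sum_i f i).
Proof.
move=> H; rewrite (bigD1 j) //= RplusE.
have h : Rle 0 (\sum_(i | i != j) f i) by apply: sum_ge0 => i _; exact: H.
rewrite -{1}(Rplus_0_r (f j)); exact: Rplus_le_compat_l.
Qed.

Lemma sum_abs_le (I : finType) (f g : I -> R) :
  (forall i, Rle (Rabs (f i)) (g i)) -> Rle (Rabs (\sum_i f i)) (\sum_i g i).
Proof.
move=> H; apply: (big_rec2 (fun a b => Rle (Rabs a) b)).
  by rewrite Rabs_R0; apply: Rle_refl.
move=> i a b _ h; rewrite !RplusE.
apply: Rle_trans (Rabs_triang _ _) _; exact: Rplus_le_compat.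
Qed.

Section PositiveDefinite.
Variable p : nat.
Implicit Types (A B : 'M[R]_p) (v : 'cV[R]_p).

Lemma posdef_sym A : posdef A -> A^T = A. Proof. by case. Qed.

(* A positive definite matrix has trivial kernel, hence is invertible. *)
Lemma posdef_unit A : posdef A -> A \in unitmx.
Proof.
case=> _ HA; case Hu: (A \in unitmx) => //; exfalso.
have Hk : kermx A != 0 by rewrite kermx_eq0 row_free_unit Hu.
have /existsP [i Hi] : [exists i, row i (kermx A) != 0].
  apply: contraNT Hk => /existsPn H; apply/eqP/row_matrixP => i.
  by rewrite row0; apply/eqP; move: (H i); rewrite negbK.
set w := row i (kermx A) in Hi.
have Hw : w *m A = 0 by rewrite /w -row_mul mulmx_ker row0.
have Hv : w^T <> 0.
  by move=> h; move/eqP: Hi; apply; rewrite -(trmxK w) h trmx0.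
have := HA _ Hv; rewrite /qform trmxK Hw mul0mx mxE.
exact: Rlt_irrefl.
Qed.

Lemma posdef_inv A : posdef A -> posdef (invmx A).
Proof.
move=> HA; have Hu := posdef_unit HA; case: HA => Hs HA; split.
  by rewrite /Defs.symmetric trmx_inv Hs.
move=> v Hv; rewrite qformE.
have -> : invmx A = invmx A *m A *m invmx A by rewrite mulVmx // mul1mx.
rewrite bil_mul trmx_inv Hs -qformE; apply: HA.
by move=> h; apply: Hv; rewrite -(mulKVmx Hu v) h mulmx0.
Qed.

Lemma posdef_conj A B : posdef A -> B \in unitmx -> posdef (B^T *m A *m B).
Proof.
case=> Hs HA Hu; split.
  by rewrite /Defs.symmetric !trmx_mul trmxK Hs mulmxA.
move=> v Hv; rewrite qformE bil_mul trmxK -qformE; apply: HA.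
by move=> h; apply: Hv; rewrite -(mulKmx Hu v) h mulmx0.
Qed.

Lemma posdef_qform_ge0 A v : posdef A -> Rle 0 (qform A v).
Proof.
case=> _ HA; case: (eqVneq v 0) => [->|Hv].
  by rewrite /qform mulmx0 mxE; apply: Rle_refl.
by apply: Rlt_le; apply: HA; apply/eqP.
Qed.

Lemma posdef1 : posdef (1%:M : 'M[R]_p).
Proof.
split; first by rewrite /Defs.symmetric trmx1.
move=> v Hv; rewrite /qform mulmx1 mxE.
have /existsP [k Hk] : [exists k, v k ord0 != 0].
  apply: contraT => /existsPn H; exfalso; apply: Hv; apply/matrixP => i j.
  by rewrite (ord1 j) mxE; apply/eqP; move: (H i); rewrite negbK.
apply: (Rlt_le_trans _ _ _ _ (@sum_ge_term _ (fun i => v^T ord0 i * v i ord0) k _)).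
  by rewrite mxE RmultE; apply: Rsqr_pos_lt; apply/eqP.
by move=> i; rewrite mxE RmultE; apply: Rle_0_sqr.
Qed.
End PositiveDefinite.

Section Moments.
Variable p : nat.
Variable M : 'M[R]_p.
Hypothesis HM : posdef M.

Definition mom k (v : 'cV[R]_p) := bil (M ^+ k) v v.

Lemma symX k : (M ^+ k)^T = M ^+ k.
Proof.
elim: k => [|k IH]; first by rewrite expr0 trmx1.
by rewrite exprS -mulmxE trmx_mul IH (posdef_sym HM) mulmxE -exprS exprSr.
Qed.

Lemma unitX k : M ^+ k \in unitmx.
Proof.
elim: k => [|k IH]; first by rewrite expr0 unitmx1.
by rewrite exprS -mulmxE unitmx_mul IH (posdef_unit HM).
Qed.

Lemma bil_powE e a b v w :
  bil (M ^+ e) (M ^+ a *m v) (M ^+ b *m w) = bil (M ^+ (a + e + b)) v w.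
Proof. by rewrite -{1}(symX a) -bil_mul !mulmxE -!exprD. Qed.

(* Even powers are congruent to 1, odd ones to M. *)
Lemma posdefX k : posdef (M ^+ k).
Proof.
rewrite -(odd_double_half k) -addnn; case: (odd k) => /=.
- have -> : M ^+ (1 + (k./2 + k./2)) = (M ^+ k./2)^T *m M *m M ^+ k./2.
    by rewrite symX !mulmxE -exprSr -exprD addSn.
  exact: posdef_conj HM (unitX _).
- have -> : M ^+ (0 + (k./2 + k./2)) = (M ^+ k./2)^T *m 1%:M *m M ^+ k./2.
    by rewrite symX mulmx1 mulmxE -exprD.
  exact: posdef_conj (posdef1 p) (unitX _).
Qed.

Lemma mom_pos k v : v != 0 -> Rlt 0 (mom k v).
Proof. by move=> Hv; case: (posdefX k) => _ H; apply: H; apply/eqP. Qed.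

Lemma mom_shift k x : mom k (M *m x) = mom k.+2 x.
Proof.
have := bil_powE k 1 1 x x; rewrite expr1 /mom => ->.
by have -> : (1 + k + 1 = k.+2)%N by lia.
Qed.

(* Log-convexity: writing j = 2 i + e, the three moments are values of the
   positive semidefinite form of M^e at M^i v and M^(i+1) v. *)
Lemma mom_logconvex j v : Rle (mom j.+1 v * mom j.+1 v) (mom j v * mom j.+2 v).
Proof.
set e := odd j; set i := j./2.
have Hj : j = (i + e + i)%N.
  by rewrite /i /e; have := odd_double_half j; rewrite -addnn; lia.
have E1 : mom j.+1 v = bil (M ^+ e) (M ^+ i *m v) (M ^+ i.+1 *m v).
  by rewrite bil_powE /mom; congr (bil (M ^+ _) v v); lia.
have E0 : mom j v = bil (M ^+ e) (M ^+ i *m v) (M ^+ i *m v).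
  by rewrite bil_powE /mom; congr (bil (M ^+ _) v v); lia.
have E2 : mom j.+2 v = bil (M ^+ e) (M ^+ i.+1 *m v) (M ^+ i.+1 *m v).
  by rewrite bil_powE /mom; congr (bil (M ^+ _) v v); lia.
rewrite E0 E1 E2; apply: cauchy_schwarz; first exact: symX.
by move=> w; exact: (posdef_qform_ge0 w (posdefX e)).
Qed.
End Moments.

Section PowerExpansion.
Variable p : nat.
Variables A B : 'M[R]_p.

Fixpoint first_coef k : 'M[R]_p :=
  if k is k'.+1 then first_coef k' *m A + A ^+ k' *m B else 0.
Fixpoint rest_coef k (d : R) : 'M[R]_p :=
  if k is k'.+1 then rest_coef k' d *m A + first_coef k' *m B + d *: (rest_coef k' d *m B)
  else 0.

Lemma power_expansion k d :
  (A + d *: B) ^+ k = A ^+ k + d *: first_coef k + (d * d) *: rest_coef k d.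
Proof.
elim: k => [|k IH]; first by rewrite !expr0 /= !scaler0 !addr0.
rewrite exprSr IH /= -mulmxE.
rewrite !(mulmxDl, mulmxDr) -!scalemxAl -!scalemxAr !scalerA mulmxE -exprSr.
rewrite !scalerDr !scalerA -!addrA; congr (_ + _).
rewrite [LHS]addrCA; congr (_ + _); congr (_ + _); by rewrite [LHS]addrCA.
Qed.

Lemma tr_first_coefX k j :
  \tr (first_coef k *m A ^+ j) = k%:R * \tr (A ^+ (k + j).-1 *m B).
Proof.
elim: k j => [|k IH] j /=; first by rewrite mul0mx mxtrace0 mul0r.
rewrite mulmxDl -mulmxA mxtraceD.
have -> : A *m A ^+ j = A ^+ j.+1 by rewrite mulmxE -exprS.
rewrite IH [X in _ + X = _]mxtrace_mulC mulmxA !mulmxE -exprD.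
have -> : (k + j.+1).-1 = (k + j)%N by lia.
by rewrite addnC -[k.+1]addn1 natrD mulrDl mul1r.
Qed.

Lemma tr_first_coef k : \tr (first_coef k) = k%:R * \tr (A ^+ k.-1 *m B).
Proof. by have := tr_first_coefX k 0; rewrite expr0 addn0 mulmxE mulr1. Qed.

Definition unif_bounded (F : R -> 'M[R]_p) := exists C, Rle R0 C /\
  forall d, Rle (Rabs d) R1 -> forall i j, Rle (Rabs (F d i j)) C.

Definition mxabs (Y : 'M[R]_p) : R := \sum_i \sum_j Rabs (Y i j).

Lemma mxabs_ge0 (Y : 'M[R]_p) : Rle 0 (mxabs Y).
Proof. by apply: sum_ge0 => i _; apply: sum_ge0 => j _; apply: Rabs_pos. Qed.

Lemma mxabs_ge (Y : 'M[R]_p) (i j : 'I_p) : Rle (Rabs (Y i j)) (mxabs Y).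
Proof.
apply: Rle_trans (@sum_ge_term _ (fun j => Rabs (Y i j)) j _) _.
  by move=> k; apply: Rabs_pos.
apply: (@sum_ge_term _ (fun i => \sum_j Rabs (Y i j)) i).
by move=> k; apply: sum_ge0 => l _; apply: Rabs_pos.
Qed.

Lemma unif_bounded_const (Y : 'M[R]_p) : unif_bounded (fun _ => Y).
Proof. by exists (mxabs Y); split; [exact: mxabs_ge0|move=> d _ i j; exact: mxabs_ge]. Qed.

Lemma unif_bounded_add F G :
  unif_bounded F -> unif_bounded G -> unif_bounded (fun d => F d + G d).
Proof.
move=> [C [HC HF]] [D [HD HG]]; exists (Rplus C D); split; first lra.
move=> d hd i j; rewrite mxE RplusE.
by apply: Rle_trans (Rabs_triang _ _) _; apply: Rplus_le_compat; auto.
Qed.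

Lemma unif_bounded_scale F : unif_bounded F -> unif_bounded (fun d => d *: F d).
Proof.
move=> [C [HC HF]]; exists C; split => // d hd i j; rewrite mxE RmultE Rabs_mult.
have h2 := Rabs_pos (F d i j).
apply: Rle_trans (Rmult_le_compat_r _ _ _ h2 hd) _; rewrite Rmult_1_l; exact: HF.
Qed.

Lemma unif_bounded_mulr F (Y : 'M[R]_p) :
  unif_bounded F -> unif_bounded (fun d => F d *m Y).
Proof.
move=> [C [HC HF]]; exists (\sum_(l < p) (C * mxabs Y))%R; split.
  by apply: sum_ge0 => l _; apply: Rmult_le_pos => //; exact: mxabs_ge0.
move=> d hd i j; rewrite mxE; apply: sum_abs_le => l.
rewrite RmultE Rabs_mult; apply: Rmult_le_compat; try exact: Rabs_pos.
  exact: HF.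
exact: mxabs_ge.
Qed.

Lemma rest_coef_bounded k : unif_bounded (rest_coef k).
Proof.
elim: k => [|k IH] /=.
  exists 0%R; split; first exact: Rle_refl.
  by move=> d _ i j; rewrite mxE Rabs_R0; apply: Rle_refl.
apply: unif_bounded_add; first apply: unif_bounded_add.
- exact: unif_bounded_mulr.
- exact: unif_bounded_const.
- by apply: (unif_bounded_scale (F := fun d => rest_coef k d *m B)); exact: unif_bounded_mulr.
Qed.

Lemma tr_rest_coef_bounded k : exists C, Rle R0 C /\
  forall d, Rle (Rabs d) R1 -> Rle (Rabs (\tr (rest_coef k d))) C.
Proof.
have [C [HC HF]] := rest_coef_bounded k.
exists (\sum_(i < p) C)%R; split; first exact: sum_ge0.
by move=> d hd; rewrite /mxtrace; apply: sum_abs_le => i; exact: HF.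
Qed.
End PowerExpansion.

Lemma invmx_right p (A B : 'M[R]_p) : A *m B = 1%:M -> invmx A = B.
Proof.
move=> h; have [uA uB] := mulmx1_unit h.
by rewrite -[invmx A]mulmx1 -h mulmxA mulVmx // mul1mx.
Qed.

(* Matrix determinant lemma: det(1 - a b^T) = 1 - b^T a, via a block
   factorisation of the (p+1) x (p+1) bordered matrix. *)
Lemma det_sub_rank1 p (a b : 'cV[R]_p) :
  \det (1%:M - a *m b^T) = 1 - (b^T *m a) ord0 ord0.
Proof.
pose L : 'M[R]_(p + 1) := block_mx 1%:M 0 b^T 1%:M.
pose U : 'M[R]_(p + 1) := block_mx 1%:M a 0 (1%:M - b^T *m a).
pose L2 : 'M[R]_(p + 1) := block_mx (1%:M - a *m b^T) a 0 1%:M.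
have E : L *m U = L2 *m L.
  rewrite /L /U /L2 !mulmx_block !(mul1mx, mulmx1, mul0mx, mulmx0, addr0, add0r).
  by rewrite subrK addrC subrK.
have := congr1 determinant E.
rewrite !det_mulmx /L /U /L2 det_lblock det_ublock det_ublock !det1 !mul1r !mulr1.
by rewrite det_mx11 => <-; rewrite !mxE.
Qed.

Section RankOnePerturbation.
Variable p : nat.
Variables (Sg : 'M[R]_p) (u : 'cV[R]_p) (d : R).
Hypothesis HS : posdef Sg.

Definition pert_prec := invmx Sg - d *: (u *m u^T).

Lemma qform_pert_prec x : qform pert_prec x =
  qform (invmx Sg) x - d * ((u^T *m x) ord0 ord0 * (u^T *m x) ord0 ord0).
Proof. by rewrite /pert_prec qformE bilD bilN bilZ bil_rank1 dot_sym. Qed.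

Lemma pert_prec_posdef : Rlt (d * qform Sg u) R1 -> posdef pert_prec.
Proof.
move=> Hdk; have HSi := posdef_inv HS; split.
  by rewrite /Defs.symmetric /pert_prec linearB /= linearZ /= (posdef_sym HSi) trmx_mul trmxK.
move=> x Hx; rewrite qform_pert_prec.
have HQ : Rlt 0 (qform (invmx Sg) x) by case: HSi => _ h; exact: h.
(* Cauchy-Schwarz for the form of Sigma^{-1} at Sigma u and x *)
have Hcs := cauchy_schwarz (Sg *m u) x (posdef_sym HSi) (fun v => posdef_qform_ge0 v HSi).
have SuE : forall y, bil (invmx Sg) (Sg *m u) y = (u^T *m y) ord0 ord0.
  move=> y; rewrite /bil trmx_mul (posdef_sym HS) -(mulmxA u^T).
  by rewrite mulmxV ?posdef_unit // mulmx1.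
have SuSu : (u^T *m (Sg *m u)) ord0 ord0 = qform Sg u by rewrite /qform mulmxA.
rewrite !SuE SuSu -qformE in Hcs.
have Hk : Rle 0 (qform Sg u) by apply: posdef_qform_ge0.
move: Hcs HQ Hdk Hk; set s := (u^T *m x) ord0 ord0; set Q := qform _ x.
set k := qform Sg u; Rsimpl => Hcs HQ Hdk Hk.
case: (Rle_lt_dec d 0) => hd.
  have : Rle 0 (Rmult (Ropp d) (Rmult s s)) by apply: Rmult_le_pos; nra.
  nra.
have : Rle (Rmult d (Rmult s s)) (Rmult d (Rmult k Q)) by apply: Rmult_le_compat_l; lra.
nra.
Qed.
End RankOnePerturbation.

(* invmx (P^{-1} Sigma P^{-1}) = P Sigma^{-1} P: the prior term of the
   posterior only involves the conjugated precision P Sigma^{-1} P. *)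
Lemma inv_conj_inv p (P Sigma : 'M[R]_p) : P \in unitmx -> Sigma \in unitmx ->
  invmx (invmx P *m Sigma *m invmx P) = P *m invmx Sigma *m P.
Proof.
move=> uP uS; apply: invmx_right.
rewrite -!mulmxA (mulmxA (invmx P) P) mulVmx // mul1mx.
by rewrite (mulmxA Sigma) mulmxV // mul1mx mulVmx.
Qed.

Section LogPosterior.
Variables (p n q : nat) (m : R) (P : 'M[R]_p) (X : 'I_n -> 'cV[R]_p) (mu : 'cV[R]_p).

(* N = n + p + q m + 1: the exponent of |Sigma|^{-1/2} in the posterior. *)
Definition Ncoef : R := Rplus (Rplus (Rplus (INR n) (INR p)) (Rmult (INR q) m)) R1.

Definition log_post (Sigma : 'M[R]_p) : R :=
  Rminus (Rminus (Rmult (Ropp (Rdiv Ncoef 2)) (ln (\det Sigma)))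
     (Rdiv (\sum_(i < n) qform (invmx Sigma) (X i - mu)) 2))
     (Rdiv (\tr ((invmx (invmx P *m Sigma *m invmx P)) ^+ q)) 2).

Lemma piw_posteriorE Sigma :
  piw_posterior q m (invmx P) X mu Sigma = exp (log_post Sigma).
Proof.
rewrite /piw_posterior /log_post /Rpower -!exp_plus; f_equal.
set D := ln _; set S := bigop.body _ _ _; set T := mxtrace _.
by rewrite /Ncoef; field.
Qed.

Definition scatter (u : 'cV[R]_p) : R :=
  \sum_(i < n) ((u^T *m (X i - mu)) ord0 ord0 * (u^T *m (X i - mu)) ord0 ord0).

Lemma scatter_ge0 u : Rle 0 (scatter u).
Proof. by apply: sum_ge0 => i _; rewrite RmultE; apply: Rle_0_sqr. Qed.

Lemma scatter0 : scatter 0 = 0.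
Proof. by rewrite /scatter big1 // => i _; rewrite trmx0 mul0mx mxE mul0r. Qed.

Section Perturbation.
Variable Sg : 'M[R]_p.
Hypotheses (HP : posdef P) (HSg : posdef Sg).

Definition cprec := P *m invmx Sg *m P.

(* ln |Sigma| uses Stdlib's ln, which vanishes on nonpositive reals; instead
   of proving det Sigma > 0 we carry its indicator and rule out 0 later. *)
Definition det_pos_ind : R := if Rlt_dec R0 (\det Sg) then R1 else R0.

Variables (u : 'cV[R]_p) (d : R).
Hypothesis Hdk : Rlt (d * qform Sg u) R1.

Definition pert_cov := invmx (pert_prec Sg u d).

Lemma pert_cov_posdef : posdef pert_cov.
Proof. exact/posdef_inv/pert_prec_posdef. Qed.

Lemma sum_pert : \sum_(i < n) qform (invmx pert_cov) (X i - mu) =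
   \sum_(i < n) qform (invmx Sg) (X i - mu) - d * scatter u.
Proof.
rewrite /pert_cov invmxK /scatter mulr_sumr -sumrB; apply: eq_bigr => i _.
by rewrite qform_pert_prec.
Qed.

Lemma tr_pert :
  \tr ((invmx (invmx P *m pert_cov *m invmx P)) ^+ q) =
  \tr (cprec ^+ q) - d * (q%:R * mom cprec q.-1 (P *m u))
  + (d * d) * \tr (rest_coef cprec (- ((P *m u) *m (P *m u)^T)) q d).
Proof.
set z := P *m u.
have uC : pert_cov \in unitmx by apply/posdef_unit/pert_cov_posdef.
rewrite inv_conj_inv ?(posdef_unit HP) // /pert_cov invmxK.
have -> : P *m pert_prec Sg u d *m P = cprec + d *: (- (z *m z^T)).
  rewrite /pert_prec mulmxBr mulmxBl /cprec; congr (_ + _).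
  rewrite -scalemxAr -scalemxAl scalerN; congr (- (d *: _)).
  by rewrite /z trmx_mul (posdef_sym HP) !mulmxA.
rewrite power_expansion !mxtraceD !mxtraceZ tr_first_coef mulmxN raddfN /=.
rewrite mulmxA mxtrace_mulC trace_mx11 /mom /bil mulmxA.
by rewrite mxE !mulrN.
Qed.

Lemma det_pert :
  \det pert_cov = Rmult (\det Sg) (Rinv (Rminus R1 (d * qform Sg u))).
Proof.
have uS := posdef_unit HSg.
have HW : pert_prec Sg u d = invmx Sg *m (1%:M - (d *: (Sg *m u)) *m u^T).
  rewrite mulmxBr mulmx1 -scalemxAl -scalemxAr !mulmxA mulVmx //.
  by rewrite mul1mx.
have Hd : \det Sg != 0 by rewrite -unitfE -unitmxE.
rewrite /pert_cov det_inv HW det_mulmx det_sub_rank1 det_inv.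
have -> : (u^T *m (d *: (Sg *m u))) ord0 ord0 = d * qform Sg u.
  by rewrite -scalemxAr mxE /qform mulmxA.
have h1 : Rminus R1 (d * qform Sg u) <> R0 by move: Hdk; Rsimpl; lra.
rewrite invfM invrK; congr (_ * _).
by rewrite /GRing.inv /= /R_inv; case: eqP => // /h1.
Qed.

Lemma ln_det_pert : ln (\det pert_cov) =
  Rminus (ln (\det Sg)) (Rmult det_pos_ind (ln (Rminus R1 (d * qform Sg u)))).
Proof.
have hpos : Rlt R0 (Rminus R1 (d * qform Sg u)) by move: Hdk; Rsimpl; lra.
rewrite det_pert /det_pos_ind; case: Rlt_dec => hD.
  rewrite ln_mult //; last exact: Rinv_0_lt_compat.
  by rewrite ln_Rinv //= ; ring.
have hD' : Rle (\det Sg) R0 by apply: Rnot_lt_le.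
have hDd : Rle (Rmult (\det Sg) (Rinv (Rminus R1 (d * qform Sg u)))) R0.
  have := Rmult_le_compat_r _ _ _ (Rlt_le _ _ (Rinv_0_lt_compat _ hpos)) hD'.
  by rewrite Rmult_0_l.
by rewrite (ln_nonpos hD') (ln_nonpos hDd) /=; ring.
Qed.

Lemma log_post_pert :
  log_post pert_cov =
  Rplus (log_post Sg)
    (Rdiv (Rminus (Rplus (Rmult (Rmult det_pos_ind Ncoef) (ln (Rminus R1 (d * qform Sg u))))
                         (Rmult d (Rplus (scatter u) (Rmult (INR q) (mom cprec q.-1 (P *m u))))))
                  (Rmult (Rmult d d) (\tr (rest_coef cprec (- ((P *m u) *m (P *m u)^T)) q d))))
          2).
Proof.
rewrite /log_post ln_det_pert sum_pert tr_pert.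
rewrite inv_conj_inv ?posdef_unit //.
set S := \sum_(i < n) _; set T := \tr (cprec ^+ q); set E := \tr _.
set L := ln (Rminus R1 _); set b := mom _ _ _.
by rewrite -/cprec; Rsimpl; field.
Qed.
End Perturbation.
End LogPosterior.

Lemma Ncoef_pos p n q (m : R) : Rle R0 m -> Rlt R0 (Ncoef p n q m).
Proof.
rewrite /Ncoef => Hm; have := pos_INR n; have := pos_INR p; have := pos_INR q.
by move=> h1 h2 h3; have := Rmult_le_pos _ _ h1 Hm; lra.
Qed.

Lemma cprec_posdef p (P Sg : 'M[R]_p) : posdef P -> posdef Sg -> posdef (cprec P Sg).
Proof.
move=> HP HSg; rewrite /cprec -{1}(posdef_sym HP).
exact: posdef_conj (posdef_inv HSg) (posdef_unit HP).
Qed.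

Section Stationarity.
Variables (p n q : nat) (m : R) (P : 'M[R]_p) (X : 'I_n -> 'cV[R]_p).
Variables (mu : 'cV[R]_p) (Sg : 'M[R]_p).
Hypotheses (HP : posdef P) (HSg : posdef Sg) (Hm : Rle R0 m) (Hq : (0 < q)%N).
Hypothesis Hmax : forall S', posdef S' ->
  Rle (piw_posterior q m (invmx P) X mu S') (piw_posterior q m (invmx P) X mu Sg).

Let N := Ncoef p n q m.
Let M := cprec P Sg.

(* Maximality against the perturbations pert_cov, for |d| small, forces the
   first-order coefficient of the log-posterior change to vanish. *)
Lemma stationarity_ind u :
  Rplus (scatter X mu u) (Rmult (INR q) (mom M q.-1 (P *m u))) =
  Rmult (Rmult (det_pos_ind Sg) N) (qform Sg u).
Proof.
set k := qform Sg u; set b := mom M q.-1 (P *m u); set A := scatter X mu u.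
set c := det_pos_ind Sg.
have Hk : Rle R0 k by apply: posdef_qform_ge0.
have HN : Rlt R0 N := Ncoef_pos p n q Hm.
have Hc : c = R1 \/ c = R0 by rewrite /c /det_pos_ind; case: Rlt_dec; [left|right].
have [C [HC HCb]] := tr_rest_coef_bounded M (- ((P *m u) *m (P *m u)^T)) q.
suff : Rminus (Rplus A (Rmult (INR q) b)) (Rmult (Rmult c N) k) = R0 by lra.
apply: (@first_order_vanishes (step_bound k) (Rplus C (Rmult (Rplus N N) (Rmult k k)))).
- exact: step_bound_pos.
- by have := Rmult_le_pos _ _ (Rlt_le _ _ HN) (Rmult_le_pos _ _ Hk Hk); lra.
move=> d hd; have [hd1 hdk] := small_step Hk hd.
have hdk1 : Rlt (d * k) R1 by move: hdk; Rsimpl; split_Rabs; lra.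
have hmax : Rle (log_post q m P X mu (pert_cov Sg u d)) (log_post q m P X mu Sg).
  by apply: exp_le_inv; rewrite -!piw_posteriorE; apply/Hmax/pert_cov_posdef.
rewrite (log_post_pert q m X mu HP HSg hdk1) -/M -/c -/k -/b -/A in hmax.
set E := \tr _ in hmax; have hE := HCb d hd1; rewrite -/E in hE.
have hl := ln_one_minus_lower hdk.
set L1 := ln (Rminus R1 (Rmult d k)) in hl hmax.
have hE2 : Rle (Rmult (Rmult d d) E) (Rmult (Rmult d d) C).
  by apply: Rmult_le_compat_l; [nra|move: hE; split_Rabs; lra].
have hcl : Rle (Rmult (Rmult c N) (Ropp (Rplus (Rmult d k) (Rmult 2 (Rmult (Rmult d k) (Rmult d k))))))
               (Rmult (Rmult c N) L1).
  by apply: Rmult_le_compat_l; [case: Hc => ->; nra|lra].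
have hck : Rle (Rmult (Rmult c N) (Rmult (Rmult d d) (Rmult k k)))
               (Rmult N (Rmult (Rmult d d) (Rmult k k))).
  by apply: Rmult_le_compat_r; [nra|case: Hc => ->; lra].
move: hmax; rewrite -/N; Rsimpl => hmax; lra.
Qed.

(* The stationarity equation A(u) + q (P u)^T M^(q-1) (P u) = N u^T Sg u.
   The degenerate indicator 0 would force the positive left side to vanish. *)
Lemma stationarity u :
  Rplus (scatter X mu u) (Rmult (INR q) (mom M q.-1 (P *m u))) = Rmult N (qform Sg u).
Proof.
have := stationarity_ind u; rewrite /det_pos_ind.
case: Rlt_dec => /= _; first by rewrite Rmult_1_l.
rewrite !Rmult_0_l => h.
case: (eqVneq u 0) => [->|hu].
  by rewrite scatter0 mulmx0 /mom qformE !bil0r !Rmult_0_r Rplus_0_l.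
have hPu : P *m u != 0.
  by apply: contraNneq hu => h0; rewrite -(mulKmx (posdef_unit HP) u) h0 mulmx0.
have := mom_pos (cprec_posdef HP HSg) q.-1 hPu.
have := scatter_ge0 X mu u; have : Rlt R0 (INR q) by apply: lt_0_INR; lia.
by move=> h1 h2 h3; have := Rmult_lt_0_compat _ _ h1 h3; move: h; rewrite -/M; lra.
Qed.

(* In the variable x = P^{-1} Sg u the equation becomes a relation between
   the moments of M: N a_1(x) = A(Sg^{-1} P x) + q a_(q+1)(x). *)
Lemma qform_back x : qform Sg (invmx Sg *m (P *m x)) = mom M 1 x.
Proof.
rewrite qformE mulmxA -{1}(trmxK (invmx Sg *m P)) -bil_mul /mom expr1.
rewrite trmx_mul trmx_inv (posdef_sym HSg) (posdef_sym HP).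
rewrite -!mulmxA (mulmxA (invmx Sg) Sg) mulVmx ?(posdef_unit HSg) // mul1mx.
by rewrite /M /cprec mulmxA.
Qed.

Lemma moment_relation x :
  Rmult N (mom M 1 x) =
  Rplus (scatter X mu (invmx Sg *m (P *m x))) (Rmult (INR q) (mom M q.+1 x)).
Proof.
rewrite -qform_back -stationarity; congr (Rplus _ (Rmult _ _)).
rewrite !mulmxA -/(cprec P Sg) -/M (mom_shift (cprec_posdef HP HSg)).
by have -> : (q.-1.+2 = q.+1)%N by lia.
Qed.
End Stationarity.

(* Centering at the sample mean: the deviations sum to zero, so the data term
   splits into a within-sample part and n times the squared offset. *)
Section SampleMean.
Variables (p n : nat) (X : 'I_n -> 'cV[R]_p).
Hypothesis Hn : (0 < n)%N.

Lemma INRn_mul_inv : INR n * Rinv (INR n) = 1.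
Proof. by rewrite RmultE Rinv_r //; apply: not_0_INR; lia. Qed.

Lemma sum_dev : \sum_(i < n) (X i - sample_mean X) = 0.
Proof.
rewrite sumrB sumr_const card_ord -scaler_nat /sample_mean scalerA RnatE.
by rewrite INRn_mul_inv scale1r subrr.
Qed.

Lemma sum_qform_split (G : 'M[R]_p) (mu : 'cV[R]_p) : G^T = G ->
  \sum_(i < n) qform G (X i - mu) =
  \sum_(i < n) qform G (X i - sample_mean X) + INR n * qform G (sample_mean X - mu).
Proof.
move=> HG; set c := sample_mean X - mu.
have E i : qform G (X i - mu) =
    qform G (X i - sample_mean X) + 2%:R * bil G (X i - sample_mean X) c + qform G c.
  by rewrite -qform_add // /c addrA subrK.
rewrite (eq_bigr _ (fun i _ => E i)) !big_split /=.
rewrite -mulr_sumr -bil_suml sum_dev bil0l mulr0 addr0.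
by rewrite sumr_const card_ord -mulr_natl RnatE.
Qed.

Lemma scatter_sample_mean (u : 'cV[R]_p) :
  scatter X (sample_mean X) u = INR n * qform (sample_cov X) u.
Proof.
rewrite /sample_cov qformE bilZ bil_sumG mulrA INRn_mul_inv mul1r.
by apply: eq_bigr => i _; rewrite bil_rank1 dot_sym.
Qed.
End SampleMean.

(* The MAP mean is the sample mean: for fixed Sigma the posterior only
   depends on mu through - n/2 (Xbar - mu)^T Sigma^{-1} (Xbar - mu). *)
Lemma MAP_mean p n q (m : R) (P : 'M[R]_p) (X : 'I_n -> 'cV[R]_p)
    (mu : 'cV[R]_p) (Sg : 'M[R]_p) :
  (0 < n)%N -> is_piw_MAP q m (invmx P) X mu Sg -> mu = sample_mean X.
Proof.
move=> Hn [HSg Hmap].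
have := Hmap (sample_mean X) Sg HSg; rewrite !piw_posteriorE => /exp_le_inv.
have HSi := posdef_inv HSg.
rewrite /log_post (sum_qform_split X Hn mu (posdef_sym HSi)).
set D := ln _; set S0 := \sum_(i < n) _; set T := \tr _; set Q := qform _ _.
have Hn' : Rlt R0 (INR n) by apply: lt_0_INR; lia.
Rsimpl => h.
case: (eqVneq (sample_mean X - mu) 0) => [/eqP|hne]; first by rewrite subr_eq0 => /eqP.
have HQ : Rlt R0 Q by case: HSi => _; apply; apply/eqP.
by have := Rmult_lt_0_compat _ _ Hn' HQ; lra.
Qed.

Lemma scatter_MAP p n q (m : R) (P : 'M[R]_p) (X : 'I_n -> 'cV[R]_p)
    (mu : 'cV[R]_p) (Sg : 'M[R]_p) (u : 'cV[R]_p) :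
  is_piw_MAP q m (invmx P) X mu Sg -> scatter X mu u = INR n * qform (sample_cov X) u.
Proof.
case: (posnP n) => [n0|Hn] Hmap; last by rewrite (MAP_mean Hn Hmap) scatter_sample_mean.
by subst n; rewrite /scatter big_ord0 RmultE INR_0 Rmult_0_l.
Qed.

Section MAPBounds.
Variables (p n q : nat) (m : R) (P : 'M[R]_p) (X : 'I_n -> 'cV[R]_p).
Variables (mu : 'cV[R]_p) (Sg : 'M[R]_p).
Hypotheses (HP : posdef P) (Hm : Rle R0 m) (Hq : (0 < q)%N).
Hypothesis Hmap : is_piw_MAP q m (invmx P) X mu Sg.

Let N := Ncoef p n q m.
Let M := cprec P Sg.
Let beta := Rpower (Rdiv (INR q) N) (Rinv (INR q)).
Let gamma := Rdiv (INR n) N.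

Lemma MAP_posdef : posdef Sg. Proof. by case: Hmap. Qed.

Lemma MAP_max S' : posdef S' ->
  Rle (piw_posterior q m (invmx P) X mu S') (piw_posterior q m (invmx P) X mu Sg).
Proof. by case: Hmap => _ H; apply: H. Qed.

Lemma moment_bounds x : x != 0 ->
  Rle (Rmult beta (mom M 2 x)) (mom M 1 x) /\
  Rle (Rmult (INR q) (mom M q.+1 x)) (Rmult (Rmult N beta) (mom M 2 x)).
Proof.
move=> hx; have HM : posdef M := cprec_posdef HP MAP_posdef.
have rel3 : Rle (Rmult (INR q) (mom M q.+3 x)) (Rmult N (mom M 3 x)).
  have := moment_relation HP MAP_posdef Hm Hq MAP_max (M *m x).
  rewrite -/M !(mom_shift HM) => ->.
  by have := scatter_ge0 X mu (invmx Sg *m (P *m (M *m x))); lra.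
exact: (logconvex_moment_bounds (Ncoef_pos p n q Hm) Hq (fun j => mom_pos HM j hx)
          (fun j => mom_logconvex HM j x) rel3).
Qed.

Lemma qform_bounds (w : 'cV[R]_p) :
  Rle (Rmult beta (qform (P *m P) w)) (qform Sg w) /\
  Rle (qform Sg w) (Rplus (Rmult beta (qform (P *m P) w))
                          (Rmult gamma (qform (sample_cov X) w))).
Proof.
have HSg := MAP_posdef; have HM : posdef M := cprec_posdef HP HSg.
have uP := posdef_unit HP; have uS := posdef_unit HSg.
case: (eqVneq w 0) => [->|hw].
  by rewrite !qform0 !Rmult_0_r Rplus_0_r; split; apply: Rle_refl.
set x := invmx P *m (Sg *m w).
have wE : invmx Sg *m (P *m x) = w by rewrite /x mulKVmx // mulKmx.
have hx : x != 0 by apply: contraNneq hw => h0; rewrite -wE h0 !mulmx0.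
have a1E : qform Sg w = mom M 1 x by rewrite -{1}wE qform_back.
have a2E : qform (P *m P) w = mom M 2 x.
  have Mx : M *m x = P *m w.
    rewrite /M /cprec /x !mulmxA -(mulmxA _ P) mulmxV // mulmx1.
    by rewrite -(mulmxA _ (invmx Sg)) mulVmx // mulmx1.
  rewrite -(mom_shift HM) Mx /mom expr0 /bil mulmx1 trmx_mul (posdef_sym HP).
  by rewrite /qform !mulmxA.
have HN : Rlt R0 N := Ncoef_pos p n q Hm.
have [lower upper] := moment_bounds hx.
rewrite a1E a2E; split=> //.
have rel := moment_relation HP HSg Hm Hq MAP_max x.
rewrite wE (scatter_MAP w Hmap) -/M -/N in rel.
have gammaN : Rmult gamma N = INR n by rewrite /gamma; field; lra.
apply: (Rmult_le_reg_l N) => //.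
rewrite Rmult_plus_distr_l -(Rmult_assoc N gamma) (Rmult_comm N gamma) gammaN.
move: rel upper; Rsimpl => rel upper; lra.
Qed.
End MAPBounds.

Lemma loewner_le_qform p (A B : 'M[R]_p) : A^T = A -> B^T = B ->
  (forall w, Rle (qform A w) (qform B w)) -> loewner_le A B.
Proof.
move=> HA HB H; split; first by rewrite /Defs.symmetric linearB /= HA HB.
by move=> w; rewrite qformB; have := H w; Rsimpl; lra.
Qed.

Lemma qform_delta p (A : 'M[R]_p) i : qform A (delta_mx i ord0) = A i i.
Proof. by rewrite /qform trmx_delta -mulmxA -colE -rowE !mxE. Qed.

Lemma sample_cov_sym p n (X : 'I_n -> 'cV[R]_p) : (sample_cov X)^T = sample_cov X.
Proof.
rewrite /sample_cov linearZ /= linear_sum /=; congr (_ *: _).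
by apply: eq_bigr => i _; rewrite trmx_mul trmxK.
Qed.

Theorem mainTheorem9 (p n q : nat) (m : R) (Psi Psi_half : 'M[R]_p)
    (X : 'I_n -> 'cV[R]_p) (mu_hat : 'cV[R]_p) (Sigma_hat : 'M[R]_p) :
  posdef Psi ->
  posdef Psi_half -> Psi_half *m Psi_half = Psi ->
  Rle (INR p) m ->
  (0 < q)%N ->
  is_piw_MAP q m (invmx Psi_half) X mu_hat Sigma_hat ->
  let N := Rplus (Rplus (Rplus (INR n) (INR p)) (Rmult (INR q) m)) R1 in
  let beta := Rpower (Rdiv (INR q) N) (Rinv (INR q)) in
  let gamma := Rdiv (INR n) N in
  loewner_le (beta *: Psi) Sigma_hat /\
  loewner_le Sigma_hat (beta *: Psi + gamma *: sample_cov X) /\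
  (forall i : 'I_p,
     Rle (Rmult beta (Psi i i)) (Sigma_hat i i) /\
     Rle (Sigma_hat i i)
         (Rplus (Rmult beta (Psi i i)) (Rmult gamma (sample_cov X i i)))).
Proof.
move=> HPsi HP HPP Hpm Hq Hmap N beta gamma.
have Hm : Rle R0 m by have := pos_INR p; lra.
have bounds w := qform_bounds HP Hm Hq Hmap w.
rewrite HPP in bounds.
have symS := posdef_sym (MAP_posdef Hmap); have symPsi := posdef_sym HPsi.
split; [|split].
- apply: loewner_le_qform; first by rewrite linearZ /= symPsi.
    exact: symS.
  by move=> w; rewrite qformZ; case: (bounds w).
- apply: loewner_le_qform => //.
    by rewrite linearD /= [X in X + _]linearZ [X in _ + X]linearZ /= symPsi sample_cov_sym.
  by move=> w; rewrite qformD (qformZ beta) (qformZ gamma); case: (bounds w).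
- by move=> i; have := bounds (delta_mx i ord0); rewrite !qform_delta.
Qed.
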